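(* Let $M(\mu(u))$ be the Verma module over the Yangian $\mathrm{Y}(\mathfrak{sl}_2)$ with highest vector $1_\mu$, where $\mu(u)=P(u)/Q(u)$ (as a Laurent expansion at $u=\infty$) for monic polynomials $P(u),Q(u)$ in $u$ of degree $p$. Then for any integer $s\ge p$ there exist constants $c_0,\dots,c_{s-1}\in\mathbb{C}$ such that the vector $\zeta=c_0f^{(0)}1_\mu+\cdots+c_{s-1}f^{(s-1)}1_\mu+f^{(s)}1_\mu$ satisfies $e(u)\,\zeta=0$, i.e. $e^{(r)}\zeta=0$ for all $r\ge0$.
   Context: The Yangian $\mathrm{Y}(\mathfrak{sl}_2)$ is the associative algebra over $\mathbb{C}$ with generators $e^{(r)},h^{(r)},f^{(r)}$, $r\ge0$, and relations $[h^{(r)},h^{(s)}]=0$, $[e^{(r)},f^{(s)}]=h^{(r+s)}$, $[h^{(0)},e^{(s)}]=2e^{(s)}$, $[h^{(0)},f^{(s)}]=-2f^{(s)}$, $[h^{(r+1)},e^{(s)}]-[h^{(r)},e^{(s+1)}]=h^{(r)}e^{(s)}+e^{(s)}h^{(r)}$, $[h^{(r+1)},f^{(s)}]-[h^{(r)},f^{(s+1)}]=-(h^{(r)}f^{(s)}+f^{(s)}h^{(r)})$, $[e^{(r+1)},e^{(s)}]-[e^{(r)},e^{(s+1)}]=e^{(r)}e^{(s)}+e^{(s)}e^{(r)}$, $[f^{(r+1)},f^{(s)}]-[f^{(r)},f^{(s+1)}]=-(f^{(r)}f^{(s)}+f^{(s)}f^{(r)})$. Write $e(u)=\sum_{r\ge0}e^{(r)}u^{-r-1}$.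 For $\mu(u)=1+\mu^{(0)}u^{-1}+\mu^{(1)}u^{-2}+\cdots$, the Verma module $M(\mu(u))$ is the quotient of $\mathrm{Y}(\mathfrak{sl}_2)$ by the left ideal generated by $e^{(r)}$ and $h^{(r)}-\mu^{(r)}$, $r\ge0$; $1_\mu$ is the image of $1$. *)

From mathcomp Require Import all_boot all_algebra.
From mathcomp Require Import complex Rstruct.

Set Implicit Arguments.
Unset Strict Implicit.
Unset Printing Implicit Defensive.
Import GRing.Theory.
Local Open Scope ring_scope.

Definition C : numClosedFieldType := complex Rdefinitions.R.

Inductive ygen : Type := GE of nat | GH of nat | GF of nat.

(* formal noncommutative expressions; [Scal c] is c * 1 *)
Inductive yterm : Type :=
| Gen of ygen
| Scal of C
| Add of yterm & yterm
| Mul of yterm & yterm.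

Definition tE r := Gen (GE r).
Definition tH r := Gen (GH r).
Definition tF r := Gen (GF r).
Definition tneg (a : yterm) := Mul (Scal (-1)) a.
Definition tsub (a b : yterm) := Add a (tneg b).
Definition tcomm (a b : yterm) := tsub (Mul a b) (Mul b a).

(* Equality in the Yangian Y(sl_2): the smallest congruence containing the
   axioms of an associative unital C-algebra and the defining relations. *)
Inductive yeq : yterm -> yterm -> Prop :=
| yeq_refl a : yeq a a
| yeq_sym a b : yeq a b -> yeq b a
| yeq_trans a b c : yeq a b -> yeq b c -> yeq a c
| yeq_add a a' b b' : yeq a a' -> yeq b b' -> yeq (Add a b) (Add a' b')
| yeq_mul a a' b b' : yeq a a' -> yeq b b' -> yeq (Mul a b) (Mul a' b')
| yeq_addA a b c : yeq (Add a (Add b c)) (Add (Add a b) c)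
| yeq_addC a b : yeq (Add a b) (Add b a)
| yeq_add0 a : yeq (Add (Scal 0) a) a
| yeq_mulA a b c : yeq (Mul a (Mul b c)) (Mul (Mul a b) c)
| yeq_mul1l a : yeq (Mul (Scal 1) a) a
| yeq_mul1r a : yeq (Mul a (Scal 1)) a
| yeq_mulDl a b c : yeq (Mul (Add a b) c) (Add (Mul a c) (Mul b c))
| yeq_mulDr a b c : yeq (Mul a (Add b c)) (Add (Mul a b) (Mul a c))
| yeq_mul0 a : yeq (Mul (Scal 0) a) (Scal 0)
| yeq_scalD x y : yeq (Add (Scal x) (Scal y)) (Scal (x + y))
| yeq_scalM x y : yeq (Mul (Scal x) (Scal y)) (Scal (x * y))
| yeq_scalC x a : yeq (Mul (Scal x) a) (Mul a (Scal x))
| yrel_hh r s : yeq (tcomm (tH r) (tH s)) (Scal 0)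
| yrel_ef r s : yeq (tcomm (tE r) (tF s)) (tH (r + s))
| yrel_h0e s : yeq (tcomm (tH 0) (tE s)) (Mul (Scal 2) (tE s))
| yrel_h0f s : yeq (tcomm (tH 0) (tF s)) (Mul (Scal (-2)) (tF s))
| yrel_he r s :
    yeq (tsub (tcomm (tH r.+1) (tE s)) (tcomm (tH r) (tE s.+1)))
        (Add (Mul (tH r) (tE s)) (Mul (tE s) (tH r)))
| yrel_hf r s :
    yeq (tsub (tcomm (tH r.+1) (tF s)) (tcomm (tH r) (tF s.+1)))
        (tneg (Add (Mul (tH r) (tF s)) (Mul (tF s) (tH r))))
| yrel_ee r s :
    yeq (tsub (tcomm (tE r.+1) (tE s)) (tcomm (tE r) (tE s.+1)))
        (Add (Mul (tE r) (tE s)) (Mul (tE s) (tE r)))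
| yrel_ff r s :
    yeq (tsub (tcomm (tF r.+1) (tF s)) (tcomm (tF r) (tF s.+1)))
        (tneg (Add (Mul (tF r) (tF s)) (Mul (tF s) (tF r)))).

(* [mu r] is mu^(r), so mu(u) = 1 + sum_r mu r u^(-r-1).
   [verma_eq mu a b] means  a 1_mu = b 1_mu  in M(mu(u)), i.e. a - b lies in
   the left ideal generated by e^(r) and h^(r) - mu^(r) (r >= 0), computed in
   Y(sl_2). *)
Inductive verma_eq (mu : nat -> C) : yterm -> yterm -> Prop :=
| veq_y a b : yeq a b -> verma_eq mu a b
| veq_sym a b : verma_eq mu a b -> verma_eq mu b a
| veq_trans a b c : verma_eq mu a b -> verma_eq mu b c -> verma_eq mu a c
| veq_add a a' b b' :
    verma_eq mu a a' -> verma_eq mu b b' -> verma_eq mu (Add a b) (Add a' b')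
| veq_lmul t a b : verma_eq mu a b -> verma_eq mu (Mul t a) (Mul t b)
| veq_e r : verma_eq mu (tE r) (Scal 0)
| veq_h r : verma_eq mu (tH r) (Scal (mu r)).

(* coefficient of u^(-k) in mu(u) *)
Definition mucoef (mu : nat -> C) (k : nat) : C :=
  if k is k'.+1 then mu k' else 1.

(* mu(u) is the Laurent expansion at u = oo of P(u)/Q(u), i.e.
   Q(u) mu(u) = P(u) as formal Laurent series in u^(-1):
   - the coefficient of u^n (n >= 0) of Q(u) mu(u) equals P`_n;
   - the coefficient of u^(-k-1) (k >= 0) of Q(u) mu(u) vanishes. *)
Definition laurent_expansion (P Q : {poly C}) (mu : nat -> C) : Prop :=
  (forall n : nat,
      \sum_(n <= j < size Q) Q`_j * mucoef mu (j - n) = P`_n) /\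
  (forall k : nat,
      \sum_(0 <= j < size Q) Q`_j * mucoef mu (j + k.+1) = 0).

Fixpoint lin (c : nat -> C) (k : nat) : yterm :=
  if k is k'.+1 then Add (lin c k') (Mul (Scal (c k')) (tF k')) else Scal 0.

Definition zeta (c : nat -> C) (s : nat) : yterm := Add (lin c s) (tF s).

(** Since [e^(r) f^(k) 1_mu = f^(k) e^(r) 1_mu + h^(r+k) 1_mu = mu^(r+k) 1_mu],
    the vector [e^(r) zeta] is [(sum_i c_i mu^(r+i) + mu^(r+s)) 1_mu].  Clearing
    denominators in [mu(u) = P(u)/Q(u)] says that the coefficient of every
    negative power of [u] in [Q(u) mu(u)] vanishes, i.e. the coefficients of [Q]
    annihilate the sequence [mu^(k)] as a linear recurrence.  So does every
    multiple [Q(u) u^(s-p)], which is monic of degree [s]; its lower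
    coefficients are the required [c_i]. *)

From mathcomp Require Import all_boot all_algebra.
From mathcomp Require Import complex Rstruct.

Set Implicit Arguments.
Unset Strict Implicit.
Unset Printing Implicit Defensive.
Import GRing.Theory.
Local Open Scope ring_scope.

Section VermaVector.

Variable mu : nat -> C.

Lemma verma_refl a : verma_eq mu a a.
Proof. exact/veq_y/yeq_refl. Qed.

Lemma verma_mulr0 a : verma_eq mu (Mul a (Scal 0)) (Scal 0).
Proof.
apply: veq_trans (veq_y _ (yeq_mul0 a)).
exact/veq_y/yeq_sym/yeq_scalC.
Qed.

Lemma verma_scalM x y : verma_eq mu (Mul (Scal x) (Scal y)) (Scal (x * y)).
Proof. exact/veq_y/yeq_scalM. Qed.

Lemma verma_F_E r k : verma_eq mu (Mul (tF k) (tE r)) (Scal 0).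
Proof. exact: veq_trans (veq_lmul _ (veq_e mu r)) (verma_mulr0 _). Qed.

Lemma verma_E_F r k : verma_eq mu (Mul (tE r) (tF k)) (Scal (mu (r + k))).
Proof.
have commEF : verma_eq mu (tcomm (tE r) (tF k)) (Scal (mu (r + k))).
  exact: veq_trans (veq_y _ (yrel_ef r k)) (veq_h mu (r + k)).
apply: veq_trans commEF; apply: veq_sym.
have negFE : verma_eq mu (tneg (Mul (tF k) (tE r))) (Scal 0).
  apply: veq_trans (veq_lmul _ (verma_F_E r k)) _.
  by apply: veq_trans (verma_scalM _ _) _; rewrite mulr0; apply: verma_refl.
apply: veq_trans (veq_add (verma_refl _) negFE) _.
exact: veq_trans (veq_y _ (yeq_addC _ _)) (veq_y _ (yeq_add0 _)).
Qed.

Lemma verma_E_scaleF r x k :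
  verma_eq mu (Mul (tE r) (Mul (Scal x) (tF k))) (Scal (x * mu (r + k))).
Proof.
apply: veq_trans (veq_y _ (yeq_mulA _ _ _)) _.
apply: veq_trans (veq_y _ (yeq_mul (yeq_sym (yeq_scalC x _)) (yeq_refl _))) _.
apply: veq_trans (veq_y _ (yeq_sym (yeq_mulA _ _ _))) _.
exact: veq_trans (veq_lmul _ (verma_E_F r k)) (verma_scalM _ _).
Qed.

Lemma verma_E_lin r c k :
  verma_eq mu (Mul (tE r) (lin c k)) (Scal (\sum_(i < k) c i * mu (r + i))).
Proof.
elim: k => [|k IHk] /=; first by rewrite big_ord0; apply: verma_mulr0.
apply: veq_trans (veq_y _ (yeq_mulDr _ _ _)) _.
apply: veq_trans (veq_add IHk (verma_E_scaleF r (c k) k)) _.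
by rewrite big_ord_recr; apply/veq_y/yeq_scalD.
Qed.

Lemma verma_E_zeta r c s :
  verma_eq mu (Mul (tE r) (zeta c s))
    (Scal (\sum_(i < s) c i * mu (r + i) + mu (r + s))).
Proof.
apply: veq_trans (veq_y _ (yeq_mulDr _ _ _)) _.
apply: veq_trans (veq_add (verma_E_lin r c s) (verma_E_F r s)) _.
exact/veq_y/yeq_scalD.
Qed.

End VermaVector.

Section LinearRecurrence.

Variable R : nzRingType.

Definition annihilates (q : {poly R}) (a : nat -> R) : Prop :=
  forall k, \sum_(i < size q) q`_i * a (k + i)%N = 0.

Lemma annihilates_mulXn q a d : annihilates q a -> annihilates (q * 'X^d) a.
Proof.
move=> qa k; have [->|q_neq0] := eqVneq q 0.
  by rewrite mul0r size_poly0 big_ord0.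
rewrite size_mulXn // big_split_ord /= big1 => [|i _]; last first.
  by rewrite coefMXn /= ltn_ord mul0r.
rewrite add0r -[RHS](qa (k + d)%N); apply: eq_bigr => i _.
by rewrite coefMXn /= ltnNge leq_addr /= addKn addnA.
Qed.

Lemma monic_annihilates_recurrence q a n :
  q \is monic -> size q = n.+1 -> annihilates q a ->
  forall k, \sum_(i < n) q`_i * a (k + i)%N + a (k + n)%N = 0.
Proof.
move=> q_monic size_q qa k.
have lead_q : q`_n = 1 by rewrite -[n]/(n.+1.-1) -size_q; apply/monicP.
by rewrite -[RHS](qa k) size_q big_ord_recr /= lead_q mul1r.
Qed.

End LinearRecurrence.

Lemma laurent_expansion_annihilates P Q mu :
  laurent_expansion P Q mu -> annihilates Q mu.
Proof.
case=> _ tail k; rewrite -[RHS](tail k) big_mkord.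
by apply: eq_bigr => i _; rewrite addnS addnC.
Qed.

Theorem corollary3p7 (p : nat) (P Q : {poly C}) (mu : nat -> C) :
  P \is monic -> Q \is monic -> size P = p.+1 -> size Q = p.+1 ->
  laurent_expansion P Q mu ->
  forall s : nat, (p <= s)%N ->
  exists c : nat -> C,
    forall r : nat, verma_eq mu (Mul (tE r) (zeta c s)) (Scal 0).
Proof.
move=> _ Q_monic _ size_Q Qmu s le_ps.
pose q := Q * 'X^(s - p).
have q_monic : q \is monic by rewrite monicMr ?monicXn.
have size_q : size q = s.+1.
  by rewrite size_mulXn ?monic_neq0 // size_Q addnS subnK.
have q_mu : annihilates q mu.
  exact/annihilates_mulXn/(laurent_expansion_annihilates Qmu).
exists (fun i => q`_i) => r.
apply: veq_trans (verma_E_zeta mu r _ s) _.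
rewrite (monic_annihilates_recurrence q_monic size_q q_mu r).
exact: verma_refl.
Qed.
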